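(* Let $b\in(0,1]$ and let $f:[0,1]\to[0,1]$ be $$f(x)=\begin{cases} x, & 0\le x\le \tfrac12,\\ x(1-b+bx), & \tfrac12<x\le 1.\end{cases}$$ Then: (1) The set of fixed points of $f$ is $[0,\tfrac12]\cup\{1\}$. (2) For every $x\in(\tfrac12,1)$ there exists $n\in\mathbb N$ such that $f^n(x)=p$ and $f^{n+1}(x)=f(p)=p$ for some $p\in(\tfrac12-\tfrac b4,\tfrac12]$. (3) For every $x_0\in(\tfrac12-\tfrac b4,\tfrac12]$, the sequence defined recursively by $$x_{n+1}=\frac1b\left(\sqrt{bx_n+\left(\frac{1-b}{2}\right)^2}+\frac{b-1}{2}\right),\qquad n\ge 0,$$ consists of preimages of $x_0$: $f(x_{n+1})=x_n$ for all $n\ge 0$ (so $f^n(x_n)=x_0$), i.e. this recurrence gives the points whose orbits reach $x_0$.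
   Context: $f^n$ denotes the $n$-fold composition of $f$ with itself. This $f$ arises from a population of two species with state $(x,1-x)$, but the claim concerns only the map above. *)

From Stdlib Require Import Reals.
Open Scope R_scope.

(* The map f(x) = x for x <= 1/2, x(1-b+bx) for x > 1/2
   (defined on all of R; statements restrict to [0,1]). *)
Definition popmap (b x : R) : R :=
  if Rle_dec x (1/2) then x else x * (1 - b + b * x).

Definition fiter (b : R) (n : nat) (x : R) : R := Nat.iter n (popmap b) x.

Fixpoint preseq (b x0 : R) (n : nat) : R :=
  match n with
  | O => x0
  | S m => / b * (sqrt (b * preseq b x0 m + ((1 - b) / 2) ^ 2) + (b - 1) / 2)
  end.

(* Above 1/2 the map is x |-> x - b x (1 - x), so on (1/2, x] every step lowers the
   point by at least b (1 - x) / 2 while never dropping below 1/2 - b/4, the image of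
   1/2 under the quadratic branch; hence every orbit from (1/2, 1) enters
   (1/2 - b/4, 1/2], where f is the identity.  Conversely, solving
   b w^2 + (1 - b) w = y for the root w > 1/2 inverts the quadratic branch on
   (1/2 - b/4, +oo), and this root is exactly the recurrence defining [preseq]. *)

From Stdlib Require Import Reals Lra Psatz.
Open Scope R_scope.

Lemma fiter_S (b : R) (n : nat) (x : R) :
  fiter b (S n) x = popmap b (fiter b n x).
Proof. reflexivity. Qed.

Lemma fiter_popmap (b : R) (n : nat) (x : R) :
  fiter b n (popmap b x) = fiter b (S n) x.
Proof. symmetry; apply Nat.iter_succ_r. Qed.

Lemma popmap_le_half (b x : R) : x <= 1/2 -> popmap b x = x.
Proof. intro Hx; unfold popmap; destruct (Rle_dec x (1/2)); lra. Qed.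

Lemma popmap_gt_half (b x : R) : 1/2 < x -> popmap b x = x * (1 - b + b * x).
Proof. intro Hx; unfold popmap; destruct (Rle_dec x (1/2)); lra. Qed.

Lemma popmap_eq_id (b x : R) : b <> 0 -> (popmap b x = x <-> x <= 1/2 \/ x = 1).
Proof.
  intro Hb; split.
  - intro Hfix; destruct (Rle_dec x (1/2)) as [Hx|Hx]; [now left|right].
    rewrite popmap_gt_half in Hfix by lra.
    assert (Hprod : b * x * (x - 1) = 0) by lra.
    destruct (Rmult_integral _ _ Hprod) as [Hbx|]; [|lra].
    destruct (Rmult_integral _ _ Hbx); lra.
  - intros [Hx|Hx]; [now apply popmap_le_half|].
    subst x; rewrite popmap_gt_half by lra; ring.
Qed.

Lemma popmap_gt_half_lower_bound (b y : R) :
  0 <= b -> 1/2 < y -> 1/2 - b/4 < popmap b y.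
Proof.
  intros Hb Hy; rewrite popmap_gt_half by exact Hy.
  assert (Hgap : 0 < (y - 1/2) * (1 + b * (y - 1/2))).
  { apply Rmult_lt_0_compat; [lra|].
    assert (0 <= b * (y - 1/2)) by (apply Rmult_le_pos; lra); lra. }
  nra.
Qed.

Lemma popmap_gt_half_decrease (b x y : R) :
  0 <= b -> x <= 1 -> 1/2 < y <= x -> popmap b y <= y - b * (1 - x) / 2.
Proof.
  intros Hb Hx Hy; rewrite popmap_gt_half by lra.
  assert (Hdrop : (1 - x) / 2 <= y * (1 - y)).
  { assert (0 <= (y - 1/2) * (1 - x)) by (apply Rmult_le_pos; lra).
    assert (0 <= y * (x - y)) by (apply Rmult_le_pos; lra).
    nra. }
  assert (b * ((1 - x) / 2) <= b * (y * (1 - y))) by (apply Rmult_le_compat_l; lra).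
  lra.
Qed.

Lemma iter_descends_into (f : R -> R) (a c d x : R) :
  0 < d -> (forall y, c < y <= x -> a < f y <= y - d) ->
  forall y, c < y <= x -> exists n : nat, a < Nat.iter n f y <= c.
Proof.
  intros Hd Hf y Hy.
  destruct (INR_archimed d (y - c) Hd) as [N HN].
  revert y Hy HN; induction N as [|N IH]; intros y Hy HN.
  - simpl in HN; lra.
  - destruct (Hf y Hy) as [Hlow Hstep].
    destruct (Rle_dec (f y) c) as [Hc|Hc]; [now exists 1%nat|].
    rewrite S_INR in HN.
    destruct (IH (f y)) as [n Hn]; [lra|lra|].
    exists (S n); rewrite Nat.iter_succ_r; exact Hn.
Qed.

Lemma fiter_enters_fixed_interval (b x : R) :
  0 < b -> 1/2 < x < 1 -> exists n : nat, 1/2 - b/4 < fiter b n x <= 1/2.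
Proof.
  intros Hb Hx.
  apply (iter_descends_into (popmap b) _ _ (b * (1 - x) / 2) x); [nra| |lra].
  intros y Hy; split.
  - apply popmap_gt_half_lower_bound; lra.
  - apply popmap_gt_half_decrease; lra.
Qed.

Definition popmap_inv (b y : R) : R :=
  / b * (sqrt (b * y + ((1 - b) / 2) ^ 2) + (b - 1) / 2).

Lemma preseq_S (b x0 : R) (n : nat) :
  preseq b x0 (S n) = popmap_inv b (preseq b x0 n).
Proof. reflexivity. Qed.

(* b y + ((1 - b)/2)^2 > 1/4, so the square root exceeds 1/2. *)
Lemma popmap_inv_gt_half (b y : R) :
  0 < b -> 1/2 - b/4 < y -> 1/2 < popmap_inv b y.
Proof.
  intros Hb Hy; unfold popmap_inv.
  set (s := sqrt (b * y + ((1 - b) / 2) ^ 2)).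
  assert (Hs : 1/2 < s).
  { assert (b * (1/2 - b/4) < b * y) by (apply Rmult_lt_compat_l; lra).
    unfold s; rewrite <- (sqrt_Rsqr (1/2)) by lra.
    apply sqrt_lt_1_alt; unfold Rsqr; nra. }
  apply Rmult_lt_reg_l with b; [exact Hb|].
  rewrite <- Rmult_assoc, Rinv_r by lra; lra.
Qed.

(* With c = (1 - b)/2, s the square root and w = popmap_inv b y: b w = s - c and
   1 - b = 2 c, so b (w (1 - b + b w)) = s^2 - c^2 = b y. *)
Lemma popmap_popmap_inv (b y : R) :
  0 < b -> 1/2 - b/4 < y -> popmap b (popmap_inv b y) = y.
Proof.
  intros Hb Hy.
  rewrite popmap_gt_half by (apply popmap_inv_gt_half; assumption).
  unfold popmap_inv.
  set (c := (1 - b) / 2).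
  assert (Hs2 : sqrt (b * y + c ^ 2) ^ 2 = b * y + c ^ 2)
    by (rewrite pow2_sqrt; [reflexivity|unfold c; nra]).
  apply Rmult_eq_reg_l with b; [|lra].
  replace (1 - b) with (2 * c) by (unfold c; field).
  replace ((b - 1) / 2) with (- c) by (unfold c; field).
  field_simplify; [|lra].
  rewrite Hs2; field; lra.
Qed.

Lemma preseq_gt (b x0 : R) (n : nat) :
  0 < b -> 1/2 - b/4 < x0 -> 1/2 - b/4 < preseq b x0 n.
Proof.
  intros Hb Hx0; induction n as [|n IH]; [exact Hx0|].
  rewrite preseq_S.
  assert (H := popmap_inv_gt_half b _ Hb IH); lra.
Qed.

Lemma popmap_preseq_S (b x0 : R) (n : nat) :
  0 < b -> 1/2 - b/4 < x0 -> popmap b (preseq b x0 (S n)) = preseq b x0 n.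
Proof.
  intros Hb Hx0; rewrite preseq_S.
  apply popmap_popmap_inv; [exact Hb|now apply preseq_gt].
Qed.

Lemma fiter_preseq (b x0 : R) (n : nat) :
  0 < b -> 1/2 - b/4 < x0 -> fiter b n (preseq b x0 n) = x0.
Proof.
  intros Hb Hx0; induction n as [|n IH]; [reflexivity|].
  rewrite <- fiter_popmap, popmap_preseq_S; assumption.
Qed.

Theorem proposition3p5 (b : R) (hb : 0 < b <= 1) :
  (* (1) fixed points of f on [0,1] are [0,1/2] ∪ {1} *)
  (forall x, 0 <= x <= 1 -> (popmap b x = x <-> (x <= 1/2 \/ x = 1))) /\
  (* (2) orbits from (1/2,1) land on a fixed point in (1/2 - b/4, 1/2] *)
  (forall x, 1/2 < x < 1 ->
     exists (n : nat) (p : R),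
       1/2 - b/4 < p <= 1/2 /\ fiter b n x = p /\
       fiter b (S n) x = p /\ popmap b p = p) /\
  (* (3) the recurrence gives preimages of x0 *)
  (forall x0, 1/2 - b/4 < x0 <= 1/2 ->
     forall n : nat,
       popmap b (preseq b x0 (S n)) = preseq b x0 n /\
       fiter b n (preseq b x0 n) = x0).
Proof.
  destruct hb as [Hb _].
  split; [|split].
  - intros x _; apply popmap_eq_id; lra.
  - intros x Hx.
    destruct (fiter_enters_fixed_interval b x Hb Hx) as [n Hp].
    assert (Hfix : popmap b (fiter b n x) = fiter b n x)
      by (apply popmap_le_half; lra).
    exists n, (fiter b n x); rewrite fiter_S, Hfix; tauto.
  - intros x0 Hx0 n; split.
    + apply popmap_preseq_S; lra.
    + apply fiter_preseq; lra.
Qed.
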